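(* Let $A\in\mathbb{R}^{n\times n}$, let $\lambda\in\mathbb{R}$, and let $v\in\mathbb{R}^{n\times1}$ and $u\in\mathbb{R}^{1\times n}$ satisfy $Av=\lambda v$, $uA=\lambda u$ and $uv=1$. Then for every row vector $u'\in\mathbb{R}^{1\times n}$ with $u'v=1$ there exists a matrix $Z$ conjugate (similar) to $A$ such that (i) $u'Z=\lambda u'$; (ii) $Zv=\lambda v$; and (iii) for every row vector $w$ and every scalar $\mu\neq\lambda$ with $wA=\mu w$, one has $wZ=\mu w$. *)

From HB Require Import structures.
From mathcomp Require Import all_boot all_order all_algebra.
Set Implicit Arguments. Unset Strict Implicit. Unset Printing Implicit Defensive.
Import Order.TTheory GRing.Theory Num.Theory.
Local Open Scope ring_scope.

Definition similar_mx (R : comUnitRingType) (n : nat) (A Z : 'M[R]_n) : Prop :=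
  exists2 P : 'M[R]_n, P \in unitmx & Z = invmx P *m A *m P.

(* Conjugate A by the transvection P = 1 + v (u' - u). Since (u' - u) v = 0,
   P fixes v, its inverse is 1 - v (u' - u), and P fixes every row vector
   orthogonal to v while sending u to u'. Row eigenvectors of A for an
   eigenvalue mu <> lambda are orthogonal to the lambda-eigenvector v, so
   conjugation by P moves the left lambda-eigenvector u to u' and leaves v and
   all other row eigenvectors in place. *)
From HB Require Import structures.
From mathcomp Require Import all_boot all_order all_algebra.
Set Implicit Arguments. Unset Strict Implicit. Unset Printing Implicit Defensive.
Import Order.TTheory GRing.Theory Num.Theory.
Local Open Scope ring_scope.

Section Conjugation.

Variables (R : comUnitRingType) (n : nat) (A P : 'M[R]_n).
Hypothesis P_unit : P \in unitmx.

Lemma similar_mx_conj : similar_mx A (invmx P *m A *m P).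
Proof. by exists P. Qed.

Lemma conj_row_eigen (w : 'rV[R]_n) (mu : R) :
  w *m A = mu *: w -> (w *m P) *m (invmx P *m A *m P) = mu *: (w *m P).
Proof.
move=> wA; rewrite !mulmxA -(mulmxA w) mulmxV // mulmx1 wA.
by rewrite -scalemxAl.
Qed.

Lemma conj_col_eigen (x : 'cV[R]_n) (mu : R) :
  A *m x = mu *: x ->
  (invmx P *m A *m P) *m (invmx P *m x) = mu *: (invmx P *m x).
Proof.
move=> Ax; rewrite -!mulmxA (mulmxA P) mulmxV // mul1mx Ax.
by rewrite scalemxAr.
Qed.

End Conjugation.

Section Transvection.

Variables (R : comUnitRingType) (n : nat) (v : 'cV[R]_n) (d : 'rV[R]_n).

Definition transvection : 'M[R]_n := 1%:M + v *m d.

Lemma row_transvection (w : 'rV[R]_n) :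
  w *m transvection = w + (w *m v) *m d.
Proof. by rewrite mulmxDr mulmx1 mulmxA. Qed.

Lemma row_transvection_id (w : 'rV[R]_n) : w *m v = 0 -> w *m transvection = w.
Proof. by move=> wv; rewrite row_transvection wv mul0mx addr0. Qed.

Hypothesis dv0 : d *m v = 0.

Lemma transvection_mulN : transvection *m (1%:M - v *m d) = 1%:M.
Proof.
rewrite mulmxBr mulmx1 mulmxDl mul1mx -mulmxA (mulmxA d) dv0 mul0mx mulmx0.
by rewrite addr0 addrK.
Qed.

Lemma transvection_unit : transvection \in unitmx.
Proof. by case: (mulmx1_unit transvection_mulN). Qed.

Lemma invmx_transvection : invmx transvection = 1%:M - v *m d.
Proof.
by rewrite -[invmx _]mulmx1 -{1}transvection_mulN mulmxA mulVmx ?mul1mx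
  ?transvection_unit.
Qed.

Lemma invmx_transvection_col_id : invmx transvection *m v = v.
Proof. by rewrite invmx_transvection mulmxBl mul1mx -mulmxA dv0 mulmx0 subr0. Qed.

End Transvection.

Lemma row_col_eigen_orthogonal (R : fieldType) (n : nat) (A : 'M[R]_n)
    (w : 'rV[R]_n) (x : 'cV[R]_n) (mu lambda : R) :
  mu != lambda -> w *m A = mu *: w -> A *m x = lambda *: x -> w *m x = 0.
Proof.
move=> mu_neq wA Ax.
have : (mu - lambda) *: (w *m x) = 0.
  by rewrite scalerBl scalemxAl -wA -mulmxA Ax scalemxAr subrr.
by move/eqP; rewrite scaler_eq0 subr_eq0 (negbTE mu_neq) => /eqP.
Qed.

Theorem lemma4p2 (R : realFieldType) (n : nat) (A : 'M[R]_n) (lambda : R)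
  (v : 'cV[R]_n) (u : 'rV[R]_n)
  (hAv : A *m v = lambda *: v) (huA : u *m A = lambda *: u)
  (huv : u *m v = 1%:M) :
  forall u' : 'rV[R]_n, u' *m v = 1%:M ->
    exists Z : 'M[R]_n,
      [/\ similar_mx A Z,
          u' *m Z = lambda *: u',
          Z *m v = lambda *: v &
          forall (w : 'rV[R]_n) (mu : R), mu != lambda ->
            w *m A = mu *: w -> w *m Z = mu *: w].
Proof.
move=> u' hu'v.
have dv0 : (u' - u) *m v = 0 by rewrite mulmxBl hu'v huv subrr.
set P := transvection v (u' - u).
have P_unit : P \in unitmx by apply: transvection_unit.
have uP : u *m P = u' by rewrite row_transvection huv mul1mx addrC subrK.
exists (invmx P *m A *m P); split.
- exact: similar_mx_conj.
- by rewrite -uP; apply: conj_row_eigen.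
- by rewrite -(invmx_transvection_col_id dv0); apply: conj_col_eigen.
- move=> w mu mu_neq wA.
  have wP : w *m P = w.
    by apply/row_transvection_id/(row_col_eigen_orthogonal mu_neq wA hAv).
  by rewrite -wP; apply: conj_row_eigen.
Qed.
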